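(* Let $X$ be a separable absolutely neighbourhood star-Menger space. If $Y$ is a closed and discrete subset of $X$, then $|Y|<\mathfrak{d}$.
   Context: All spaces are regular. $St(A,\mathcal{U})=\bigcup\{U\in\mathcal{U}:U\cap A\neq\emptyset\}$. $\mathfrak{d}$ is the dominating number. $X$ is absolutely neighbourhood star-Menger if for each sequence $(\mathcal{U}_n:n\in\omega)$ of open covers of $X$ and each dense subset $D$ of $X$ there is a sequence $(F_n:n\in\omega)$ of finite subsets of $D$ such that for any open sets $O_n$ with $F_n\subseteq O_n$ ($n\in\omega$), $\{St(O_n,\mathcal{U}_n):n\in\omega\}$ covers $X$. *)

From HB Require Import structures.
From mathcomp Require Import all_boot all_order.
From mathcomp Require Import boolp classical_sets functions cardinality topology.
Set Implicit Arguments. Unset Strict Implicit. Unset Printing Implicit Defensive.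
Local Open Scope classical_set_scope.

Definition star (T : Type) (A : set T) (U : set (set T)) : set T :=
  \bigcup_(V in [set V | U V /\ V `&` A !=set0]) V.

Definition open_cover (T : topologicalType) (U : set (set T)) : Prop :=
  (forall V, U V -> open V) /\ \bigcup_(V in U) V = setT.

Definition separable_space (T : topologicalType) : Prop :=
  exists D : set T, countable D /\ dense D.

Definition absolutely_nbhd_star_Menger (T : topologicalType) : Prop :=
  forall (U : nat -> set (set T)) (D : set T),
    (forall n, open_cover (U n)) -> dense D ->
    exists F : nat -> set T,
      (forall n, finite_set (F n) /\ F n `<=` D) /\
      forall O : nat -> set T,
        (forall n, open (O n) /\ F n `<=` O n) ->
        \bigcup_n star (O n) (U n) = setT.

Definition closed_discrete (T : topologicalType) (Y : set T) : Prop :=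
  closed Y /\ forall y, Y y -> exists V : set T, open V /\ V `&` Y = [set y].

Definition le_star (f g : nat -> nat) : Prop :=
  exists m, forall n, (m <= n)%N -> (f n <= g n)%N.

Definition dominating (F : set (nat -> nat)) : Prop :=
  forall f, exists2 g, F g & le_star f g.

(* |A| < d : no dominating family has cardinality <= |A|
   (d is the least cardinality of a dominating family) *)
Definition card_lt_dominating (T : Type) (A : set T) : Prop :=
  forall F : set (nat -> nat), (F #<= A)%card -> ~ dominating F.

From mathcomp Require Import all_boot all_order.
From mathcomp Require Import boolp classical_sets functions cardinality topology.
Set Implicit Arguments.
Unset Strict Implicit.
Local Open Scope classical_set_scope.

(* Let D = {d_0, d_1, ...} be a countable dense set, let Y be closed and
   discrete, and suppose a family F of functions with |F| <= |Y| dominates,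
   so that F = {psi y | y in Y} for some psi.  For y in Y choose an open V_y
   isolating y in Y, and for e <> y a closed neighbourhood C(y,e) of e
   missing y (regularity).  The covers
     U_n = {X \ Y} u {V_y \ (C(y,d_0) u ... u C(y,d_(psi y n))) | y in Y}
   are open.  Applying the star-Menger property to every shifted sequence
   (U_(k+m))_k and bounding the indices of the finite sets obtained gives a
   function b(m,k); a diagonal function h built from b and the psi(d_m)
   is dominated by some f = psi y in F.  Then y is not in D, and the open
   sets O_k = int(C(y,d_0) u ... u C(y,d_(f(k+M)))) swallow the M-th
   selection, yet no O_k meets the unique member of U_(k+M) containing y:
   a contradiction. *)

Lemma finite_code_bound (T : eqType) (code : T -> nat) (A : set T) :
  finite_set A -> exists b, forall x, A x -> (code x <= b)%N.
Proof.
move=> /finite_seqP [s ->].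
elim: s => [|a s [b Hb]]; first by exists 0%N.
exists (maxn (code a) b) => x /=; rewrite inE => /orP [/eqP ->|xs].
  by rewrite leq_maxl.
exact: leq_trans (Hb x xs) (leq_maxr _ _).
Qed.

Lemma countable_enumeration (T : choiceType) (x0 : T) (D : set T) :
  countable D ->
  exists (d : nat -> T) (code : T -> nat), forall e, D e -> d (code e) = e.
Proof.
move=> /countable_injP [code codeI].
exists (fun i => xget x0 [set e | D e /\ code e = i]), code => e De.
have : exists x, [set e' | D e' /\ code e' = code e] x by exists e.
by move=> /(xgetPex x0) [Dx cx]; apply: codeI; rewrite ?inE.
Qed.

Lemma regular_closed_nbhs {T : topologicalType} : regular_space T ->
  forall (e : T) (N : set T), nbhs e N ->
  exists C : set T, [/\ closed C, nbhs e C & C `<=` N].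
Proof.
move=> reg e N /(reg e) [B Be BN]; exists (closure B); split => //.
  exact: closed_closure.
by apply: filterS Be; exact: subset_closure.
Qed.

Section ClosedDiscrete.
Variables (T : topologicalType) (Y : set T).
Hypothesis clY : closed_discrete Y.

Lemma isolating_nbhds : exists V : T -> set T, forall y, Y y ->
  [/\ open (V y), V y y & forall z, V y z -> Y z -> z = y].
Proof.
have isolate y : exists V : set T, Y y -> open V /\ V `&` Y = [set y].
  have [Yy|nYy] := pselect (Y y); last by exists set0 => /nYy.
  by have [V HV] := clY.2 y Yy; exists V.
have [V HV] := choice isolate.
exists V => y Yy; have [oV VY] := HV y Yy.
have Vyy : (V y `&` Y) y by rewrite VY.
by split=> [||z Vz Yz] //; [case: Vyy | have : (V y `&` Y) z by []; rewrite VY].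
Qed.

Lemma closed_discrete_not_closure y e : Y y -> e <> y -> ~ closure [set y] e.
Proof.
move=> Yy ney cle; have [V HV] := isolating_nbhds.
have Ye : Y e by apply: clY.1; apply: (closureS _ cle) => _ ->.
have [oV Vee VY] := HV e Ye.
have [_ [/= -> Vy]] := cle (V e) (open_nbhs_nbhs (conj oV Vee)).
exact/ney/esym/(VY y).
Qed.

Lemma separating_closed_nbhds : regular_space T ->
  exists C : T -> T -> set T, forall y e,
    [/\ closed (C y e), ~ C y e y & (Y y -> e <> y -> nbhs e (C y e))].
Proof.
move=> reg.
suff /choice [C HC] : forall p : T * T, exists C : set T,
    [/\ closed C, ~ C p.1 & (Y p.1 -> p.2 <> p.1 -> nbhs p.2 C)].
  by exists (fun y e => C (y, e)) => y e; exact: (HC (y, e)).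
case=> y e /=; have [[Yy ney]|Nye] := pselect (Y y /\ e <> y); last first.
  by exists set0; split=> [|//|Yy ney]; [exact: closed0 | case: Nye].
have : nbhs e (~` closure [set y]).
  apply: open_nbhs_nbhs; split; last exact: closed_discrete_not_closure.
  by rewrite openC; exact: closed_closure.
move=> /(regular_closed_nbhs reg) [C [cC Ce CN]]; exists C; split => // Cy.
exact: (CN y Cy) (subset_closure (erefl y)).
Qed.

End ClosedDiscrete.

Section Covers.
Variables (T : topologicalType) (Y : set T) (V : T -> set T)
  (C : T -> T -> set T) (d : nat -> T).

Definition guard (k : nat) (y : T) : set T :=
  \bigcup_(i in `I_k.+1) C y (d i).

Definition guarded_cover (psi : T -> nat -> nat) (n : nat) : set (set T) :=
  [set ~` Y] `|` [set V y `&` ~` guard (psi y n) y | y in Y].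

(* U_n is an open cover of the space, since each guard is closed and avoids y. *)
Lemma guarded_cover_open psi n : closed Y ->
  (forall y, Y y -> open (V y) /\ V y y) ->
  (forall y e, closed (C y e) /\ ~ C y e y) ->
  open_cover (guarded_cover psi n).
Proof.
move=> clY HV HC; split.
  move=> _ [-> | [y Yy <-]]; first by rewrite openC.
  apply: openI; first by case: (HV y Yy).
  rewrite openC; apply: closed_bigcup => [|i _]; first exact: finite_II.
  by case: (HC y (d i)).
apply/seteqP; split => // x _; have [Yx|nYx] := pselect (Y x).
  exists (V x `&` ~` guard (psi x n) x); first by right; exists x.
  by split; [case: (HV x Yx) | case=> i _; case: (HC x (d i))].
by exists (~` Y) => //; left.
Qed.

(* If the points of Y are isolated by the V y, the only member of the cover
   containing y in Y is V y minus the guard; so y can only lie in the star of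
   a set O that escapes this guard. *)
Lemma star_guarded_cover psi n (O : set T) y :
  (forall y' z, Y y' -> V y' z -> Y z -> z = y') ->
  Y y -> star O (guarded_cover psi n) y -> ~ O `<=` guard (psi y n) y.
Proof.
move=> isolated Yy [W [[->|[y' Yy' <-]] [z [Wz Oz]]] Wy] Oguard; first exact: Wy.
have yy' : y = y' := isolated y' y Yy' Wy.1 Yy.
by subst y'; apply: Wz.2; exact: Oguard.
Qed.

End Covers.

(* Applying the star-Menger property to every shifted sequence (U (k + m))_k
   and bounding the codes of the finite selections: the open sets O k only
   need to contain the points of D whose code is at most b m k. *)
Lemma star_Menger_index_bounds (T : topologicalType) (U : nat -> set (set T))
    (D : set T) (code : T -> nat) :
  absolutely_nbhd_star_Menger T -> dense D -> (forall n, open_cover (U n)) ->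
  exists b : nat -> nat -> nat, forall m (O : nat -> set T),
    (forall k, open (O k) /\ forall e, D e -> (code e <= b m k)%N -> O k e) ->
    \bigcup_k star (O k) (U (k + m)%N) = setT.
Proof.
move=> ansm dD Ucov.
have shifted m : exists Fm : nat -> set T,
    (forall k, finite_set (Fm k) /\ Fm k `<=` D) /\
    forall O : nat -> set T, (forall k, open (O k) /\ Fm k `<=` O k) ->
      \bigcup_k star (O k) (U (k + m)%N) = setT.
  by apply: ansm => // k; exact: Ucov.
have [FF HFF] := choice shifted.
have bound (p : nat * nat) : exists c, forall e, FF p.1 p.2 e -> (code e <= c)%N.
  by apply: finite_code_bound; case: (HFF p.1) => /(_ p.2) [].
have [c Hc] := choice bound.
exists (fun m k => c (m, k)) => m O HO; apply: (HFF m).2 => k.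
have [oO DO] := HO k; split=> // e Fe.
by apply: DO; [exact: ((HFF m).1 k).2 | exact: (Hc (m, k))].
Qed.

Definition diagonal (b g : nat -> nat -> nat) (n : nat) : nat :=
  \max_(m < n.+1) (b m (n - m) + g m n).+1.

Lemma diagonal_gt b g {m n : nat} : (m <= n)%N ->
  (b m (n - m) + g m n < diagonal b g n)%N.
Proof.
move=> mn; have mn' : (m < n.+1)%N by [].
exact: (leq_bigmax (F := fun m : 'I_n.+1 => (b m (n - m) + g m n).+1)
  (Ordinal mn')).
Qed.

Lemma dominating_diagonal b g f : le_star (diagonal b g) f ->
  exists M, (forall m, g m <> f) /\ forall k, (b M k < f (k + M))%N.
Proof.
move=> [M fge]; exists M; split=> [m gf|k].
  have := diagonal_gt b g (leq_maxr M m); rewrite gf => lt_diag.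
  have := leq_trans (leq_ltn_trans (leq_addl _ _) lt_diag) (fge _ (leq_maxl M m)).
  by rewrite ltnn.
have := diagonal_gt b g (leq_addl k M); rewrite addnK => lt_diag.
exact: leq_trans (leq_ltn_trans (leq_addr _ _) lt_diag) (fge _ (leq_addl _ _)).
Qed.

Theorem mainTheorem8 (T : topologicalType) (Y : set T) :
  regular_space T -> separable_space T -> absolutely_nbhd_star_Menger T ->
  closed_discrete Y -> card_lt_dominating Y.
Proof.
move=> reg [D [cD dD]] ansm clY F FY domF.
have [g0 Fg0 _] := domF (fun=> 0%N).
have /pcard_surjP [psi psiF] := FY.
have [y0 _ _] := psiF g0 Fg0.
have [d [code dK]] := countable_enumeration y0 cD.
have [V HV] := isolating_nbhds clY.
have [C HC] := separating_closed_nbhds clY reg.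
have Ucov n : open_cover (guarded_cover Y V C d psi n).
  apply: guarded_cover_open clY.1 _ _ => [y Yy | y e].
    by case: (HV y Yy).
  by case: (HC y e).
have [b Hb] := star_Menger_index_bounds code ansm dD Ucov.
have [f Ff /dominating_diagonal [M [fD fb]]] := domF (diagonal b (psi \o d)).
have [y Yy psiy] := psiF f Ff.
have nDy : ~ D y by move=> Dy; apply: (fD (code y)); rewrite /= dK.
pose O k := (guard C d (f (k + M)%N) y)°.
have OD k : open (O k) /\ forall e, D e -> (code e <= b M k)%N -> O k e.
  split=> [|e De ce]; first exact: open_interior.
  have ney : e <> y by move=> ey; apply: nDy; rewrite -ey.
  have [_ _ Ce] := HC y e.
  apply: filterS (Ce Yy ney) => z Cz; exists (code e); last by rewrite dK.
  by rewrite /= ltnS (leq_trans ce) //; exact/ltnW/fb.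
(* y lies in some star of O k, which must then escape the guard of y. *)
have /seteqP [_ /(_ y I) [k _ starOk]] := Hb M O OD.
apply: (star_guarded_cover _ Yy starOk) => [y1 z Yy1 Vz Yz | ].
  by case: (HV y1 Yy1) => _ _; apply.
by rewrite psiy; exact: interior_subset.
Qed.
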